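(* Let $(G,X,\Gamma)$ be a $(\mu,\nu)$-path system group containing a $\delta$-constricting element $(g,A)$ with $\delta$-constricting map $\pi_A\colon X\to A$. For every $\varepsilon\ge0$ and $\theta\ge0$ there exists $M\in\mathbb N_{\ge1}$ with the following property. Let $H\le G$ be a subgroup and $Y\subseteq X$ a non-empty $H$-invariant subset with $\operatorname{diam}_A(Y)\le\varepsilon$. Then for every $u\in\langle g^M, H\cap E(g,A)\rangle\setminus (H\cap E(g,A))$, we have $d_A(Y,uY)>\theta$.
   Context: A path is a rectifiable continuous map $\alpha\colon[a,b]\to X$ parametrised by arc length; it is a $(\kappa,\lambda)$-quasi-geodesic if $d(\alpha(t),\alpha(t'))\le|t-t'|\le\kappa d(\alpha(t),\alpha(t'))+\lambda$. A $(\mu,\nu)$-path system group $(G,X,\Gamma)$ is a group $G$ acting properly by isometries on a geodesic metric space $X$ together with a $G$-invariant collection $\Gamma$ of paths closed under subpaths, such that any two points are joined by an element of $\Gamma$ and every element is a $(\mu,\nu)$-quasi-geodesic. A map $\pi_A\colon X\to A$ is $\delta$-constricting if (CS1) $d(x,\pi_A(x))\le\delta$ for $x\in A$, and (CS2) for all $x,y\in X$ and $\gamma\in\Gamma$ joining them, if $d(\pi_A(x),\pi_A(y))>\delta$ then $\gamma$ meets $B_X(\pi_A(x),\delta)$ and $B_X(\pi_A(y),\delta)$. An element $g$ is $\delta$-constricting, written $(g,A)$, if it has infinite order and $A$ is a $\langle g\rangle$-invariant subset with a $\delta$-constricting map, on which $\langle g\rangle$ acts $\delta$-coboundedly. $\operatorname{diam}_A(Y)=\operatorname{diam}(\pi_A(Y))$,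 $d_A(Y,Z)=\inf\{d(\pi_A(y),\pi_A(z)): y\in Y,z\in Z\}$. The elementary closure is $E(g,A)=\{u\in G: d_{Haus}(uA,A)<\infty\}$. *)

From Stdlib Require Import Reals List.
Open Scope R_scope.
Set Implicit Arguments.

Record Group := {
  gcar :> Type;
  gmul : gcar -> gcar -> gcar;
  gone : gcar;
  ginv : gcar -> gcar;
  gmulA : forall x y z, gmul x (gmul y z) = gmul (gmul x y) z;
  gmul1 : forall x, gmul gone x = x;
  gmulV : forall x, gmul (ginv x) x = gone
}.

Fixpoint gpow {G : Group} (g : G) (n : nat) : G :=
  match n with O => gone G | S k => gmul G g (gpow g k) end.

Definition is_subgroup {G : Group} (H : G -> Prop) : Prop :=
  H (gone G) /\ (forall x y, H x -> H y -> H (gmul G x y)) /\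
  (forall x, H x -> H (ginv G x)).

Definition generated {G : Group} (S : G -> Prop) : G -> Prop :=
  fun x => forall K : G -> Prop, is_subgroup K -> (forall s, S s -> K s) -> K x.

Definition infinite_order {G : Group} (g : G) : Prop :=
  forall n : nat, (1 <= n)%nat -> gpow g n <> gone G.

Record MetricSpace := {
  mcar :> Type;
  dist : mcar -> mcar -> R;
  dist_ge0 : forall x y, 0 <= dist x y;
  dist_eq0 : forall x y, dist x y = 0 <-> x = y;
  dist_sym : forall x y, dist x y = dist y x;
  dist_tri : forall x y z, dist x z <= dist x y + dist y z
}.

Section Metric.
Variable X : MetricSpace.
Local Notation d := (dist X).

Definition geodesic_space : Prop :=
  forall x y : X, exists c : R -> X,
    c 0 = x /\ c (d x y) = y /\
    forall s t, 0 <= s <= d x y -> 0 <= t <= d x y -> d (c s) (c t) = Rabs (s - t).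

(** A path: a map f defined on the interval [pa, pb] *)
Record Path := mkPath { pa : R; pb : R; pf : R -> X }.

(** partitions s = t0 <= t1 <= ... <= tn = t, given as the list [t1;...;tn] *)
Fixpoint chain_from (x : R) (l : list R) (t : R) : Prop :=
  match l with nil => x = t | y :: r => x <= y /\ chain_from y r t end.

Fixpoint psum (f : R -> X) (x : R) (l : list R) : R :=
  match l with nil => 0 | y :: r => d (f x) (f y) + psum f y r end.

(** the length of f restricted to [s,t] is (finite and equal to) L *)
Definition length_is (f : R -> X) (s t L : R) : Prop :=
  is_lub (fun S => exists l, chain_from s l t /\ S = psum f s l) L.

Definition continuous_on (f : R -> X) (a b : R) : Prop :=
  forall t, a <= t <= b -> forall e, 0 < e -> exists h, 0 < h /\
    forall t', a <= t' <= b -> Rabs (t - t') < h -> d (f t) (f t') < e.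

Definition arclength_path (p : Path) : Prop :=
  pa p <= pb p /\ continuous_on (pf p) (pa p) (pb p) /\
  forall s t, pa p <= s -> s <= t -> t <= pb p -> length_is (pf p) s t (t - s).

Definition quasi_geodesic (k l : R) (p : Path) : Prop :=
  forall t t', pa p <= t <= pb p -> pa p <= t' <= pb p ->
    d (pf p t) (pf p t') <= Rabs (t - t') /\
    Rabs (t - t') <= k * d (pf p t) (pf p t') + l.

Definition joins (p : Path) (x y : X) : Prop := pf p (pa p) = x /\ pf p (pb p) = y.

Definition meets_ball (p : Path) (c : X) (r : R) : Prop :=
  exists t, pa p <= t <= pb p /\ d (pf p t) c <= r.

End Metric.

Arguments mkPath {X}.

Definition isometric_action {G : Group} {X : MetricSpace} (act : G -> X -> X) : Prop :=
  (forall x, act (gone G) x = x) /\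
  (forall g h x, act (gmul G g h) x = act g (act h x)) /\
  (forall g x y, dist X (act g x) (act g y) = dist X x y).

Definition proper_action {G : Group} {X : MetricSpace} (act : G -> X -> X) : Prop :=
  forall (x : X) (r : R), exists l : list G,
    forall g, dist X x (act g x) <= r -> In g l.

Definition path_system_group (mu nu : R) {G : Group} {X : MetricSpace}
  (act : G -> X -> X) (Gam : Path X -> Prop) : Prop :=
  geodesic_space X /\ isometric_action act /\ proper_action act /\
  (forall g p, Gam p -> Gam (mkPath (pa p) (pb p) (fun t => act g (pf p t)))) /\
  (forall p s t, Gam p -> pa p <= s -> s <= t -> t <= pb p ->
     Gam (mkPath s t (pf p))) /\
  (forall x y : X, exists p, Gam p /\ joins p x y) /\
  (forall p, Gam p -> arclength_path p /\ quasi_geodesic mu nu p).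

Definition constricting_map {X : MetricSpace} (Gam : Path X -> Prop)
  (A : X -> Prop) (piA : X -> X) (delta : R) : Prop :=
  (forall x, A (piA x)) /\
  (forall x, A x -> dist X x (piA x) <= delta) /\
  (forall (x y : X) p, Gam p -> joins p x y ->
     dist X (piA x) (piA y) > delta ->
     meets_ball p (piA x) delta /\ meets_ball p (piA y) delta).

Definition constricting_element {G : Group} {X : MetricSpace} (act : G -> X -> X)
  (Gam : Path X -> Prop) (g : G) (A : X -> Prop) (piA : X -> X) (delta : R) : Prop :=
  infinite_order g /\
  (forall x, A x -> A (act g x) /\ A (act (ginv G g) x)) /\
  constricting_map Gam A piA delta /\
  (exists x0, A x0 /\ forall y, A y ->
     exists n : nat, dist X y (act (gpow g n) x0) <= delta \/
                     dist X y (act (gpow (ginv G g) n) x0) <= delta).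

(** elementary closure E(g,A) = { u | d_Haus(uA, A) < oo } *)
Definition elem_closure {G : Group} {X : MetricSpace} (act : G -> X -> X)
  (A : X -> Prop) : G -> Prop :=
  fun u => exists r : R,
    (forall a, A a -> exists b, A b /\ dist X (act u a) b <= r) /\
    (forall b, A b -> exists a, A a /\ dist X b (act u a) <= r).

Definition diamA_le {X : MetricSpace} (piA : X -> X) (Y : X -> Prop) (eps : R) : Prop :=
  forall y y', Y y -> Y y' -> dist X (piA y) (piA y') <= eps.

(** d_A(Y,Z) > theta, where d_A(Y,Z) = inf { d(piA y, piA z) } *)
Definition dA_gt {X : MetricSpace} (piA : X -> X) (Y Z : X -> Prop) (theta : R) : Prop :=
  exists c, theta < c /\
    forall y z, Y y -> Z z -> c <= dist X (piA y) (piA z).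

Definition translate {G : Group} {X : MetricSpace} (act : G -> X -> X)
  (u : G) (Y : X -> Prop) : X -> Prop :=
  fun z => exists y, Y y /\ z = act u y.

From Pilot Require Import Defs.
From Stdlib Require Import Reals Lra Lia ZArith List Classical IndefiniteDescription FinFun.
Open Scope R_scope.

(** The argument has three layers.
    - Geometry of a δ-constricting map [p] onto [B]: [p] is coarsely Lipschitz,
      paths between points of [B] stay uniformly close to [B] (a Morse property),
      two constricting maps onto the same set are uniformly close, hence [piA]
      is coarsely equivariant under every isometry of [X] preserving [A].
    - Algebra of the elementary closure [E = E(g,A)]: it is a subgroup, and
      properness plus coboundedness show that every [f ∈ E] lies in a bounded
      double coset [<g> F <g>] with [F] finite.  Each [f ∈ E] conjugates some
      [g^N] into [<g>]; taking [N] common to the finitely many elements of [F]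
      gives [f g^N f⁻¹ = g^P] with [|P|] uniformly bounded for all [f ∈ E], and
      iterating [f] forces [P = ±N].  So [E] normalises [<g^N>].
    - Conclusion: with [M] a multiple of [N] large enough that [g^k] moves the
      base point far for [0 < |k|], every element of [<g^M, H ∩ E>] is
      [g^(jM) k] with [k ∈ H ∩ E], and [j ≠ 0] unless [u ∈ H ∩ E]; coarse
      equivariance of [piA] turns the displacement of [g^(jM)] into
      [d_A(Y, uY) > θ]. *)

Section GroupLaws.
Variable G : Group.
Local Infix "**" := (gmul G) (at level 40, left associativity).
Local Notation "1" := (gone G).
Local Notation inv := (ginv G).

(** The record only postulates left identity and left inverse; the right-hand
    versions follow as usual. *)
Lemma gmulVr (x : G) : x ** inv x = 1.
Proof.
  rewrite <- (gmul1 G (x ** inv x)), <- (gmulV G (inv x)) at 1.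
  rewrite <- gmulA, (gmulA G (inv x) x (inv x)), gmulV, gmul1.
  apply gmulV.
Qed.

Lemma gmul1r (x : G) : x ** 1 = x.
Proof. rewrite <- (gmulV G x), gmulA, gmulVr. apply gmul1. Qed.

Lemma gmul_cancel_l (a x y : G) : a ** x = a ** y -> x = y.
Proof.
  intro Heq. rewrite <- (gmul1 G x), <- (gmul1 G y), <- (gmulV G a), <- !gmulA, Heq.
  reflexivity.
Qed.

Lemma inv_unique (x y : G) : x ** y = 1 -> y = inv x.
Proof. intro Hxy. apply (gmul_cancel_l x). rewrite Hxy, gmulVr. reflexivity. Qed.

Lemma inv_inv (x : G) : inv (inv x) = x.
Proof. symmetry. apply inv_unique, gmulV. Qed.

Lemma inv_mul (x y : G) : inv (x ** y) = inv y ** inv x.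
Proof.
  symmetry. apply inv_unique.
  rewrite gmulA, <- (gmulA G x y), gmulVr, gmul1r, gmulVr. reflexivity.
Qed.

Lemma inv_one : inv 1 = 1.
Proof. symmetry. apply inv_unique, gmul1. Qed.

Lemma gpow_comm (g : G) (n : nat) : gpow g n ** g = g ** gpow g n.
Proof.
  induction n as [|n IH]; simpl.
  - rewrite gmul1, gmul1r. reflexivity.
  - rewrite <- gmulA, IH. reflexivity.
Qed.

Lemma gpow_inv (g : G) (n : nat) : inv (gpow g n) = gpow (inv g) n.
Proof.
  induction n as [|n IH]; simpl.
  - apply inv_one.
  - rewrite inv_mul, IH, <- gpow_comm. reflexivity.
Qed.

Definition zpow (g : G) (z : Z) : G :=
  if Z_le_dec 0 z then gpow g (Z.to_nat z) else gpow (inv g) (Z.to_nat (- z)).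

Lemma zpow_nat (g : G) (n : nat) : zpow g (Z.of_nat n) = gpow g n.
Proof.
  unfold zpow. destruct (Z_le_dec 0 (Z.of_nat n)); [|lia].
  rewrite Nat2Z.id. reflexivity.
Qed.

Lemma zpow0 (g : G) : zpow g 0 = 1.
Proof. reflexivity. Qed.

Lemma zpow_succ (g : G) (z : Z) : zpow g (z + 1)%Z = g ** zpow g z.
Proof.
  unfold zpow. destruct (Z_le_dec 0 (z + 1)), (Z_le_dec 0 z); try lia.
  - replace (Z.to_nat (z + 1)) with (S (Z.to_nat z)) by lia. reflexivity.
  - assert (z = -1)%Z by lia. subst. simpl. rewrite gmul1r, gmulVr. reflexivity.
  - replace (Z.to_nat (- z)) with (S (Z.to_nat (- (z + 1)))) by lia. simpl.
    rewrite gmulA, gmulVr, gmul1. reflexivity.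
Qed.

Lemma zpow_pred (g : G) (z : Z) : zpow g (z - 1)%Z = inv g ** zpow g z.
Proof.
  replace (zpow g z) with (zpow g ((z - 1) + 1)%Z) by (f_equal; lia).
  rewrite zpow_succ, gmulA, gmulV, gmul1. reflexivity.
Qed.

Lemma zpow_add (g : G) (a b : Z) : zpow g (a + b)%Z = zpow g a ** zpow g b.
Proof.
  induction a as [|a IH|a IH] using Z.peano_ind.
  - simpl. rewrite gmul1. reflexivity.
  - replace (Z.succ a + b)%Z with ((a + b) + 1)%Z by lia.
    rewrite zpow_succ, IH, <- Z.add_1_r, zpow_succ, gmulA. reflexivity.
  - replace (Z.pred a + b)%Z with ((a + b) - 1)%Z by lia.
    rewrite zpow_pred, IH, <- Z.sub_1_r, zpow_pred, gmulA. reflexivity.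
Qed.

Lemma zpow_opp (g : G) (a : Z) : zpow g (- a)%Z = inv (zpow g a).
Proof.
  apply inv_unique. rewrite <- zpow_add. replace (a + - a)%Z with 0%Z by lia.
  reflexivity.
Qed.

Lemma zpow_comm (g : G) (a b : Z) : zpow g a ** zpow g b = zpow g b ** zpow g a.
Proof. rewrite <- !zpow_add, Z.add_comm. reflexivity. Qed.

Lemma zpow_mul (g : G) (a b : Z) : zpow (zpow g a) b = zpow g (a * b)%Z.
Proof.
  induction b as [|b IH|b IH] using Z.peano_ind.
  - rewrite Z.mul_0_r. reflexivity.
  - rewrite <- Z.add_1_r, zpow_succ, IH, <- zpow_add. f_equal. lia.
  - rewrite <- Z.sub_1_r, zpow_pred, IH, <- zpow_opp, <- zpow_add. f_equal. lia.
Qed.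

Definition gconj (c x : G) : G := c ** x ** inv c.

Lemma gconj_mul (c x y : G) : gconj c (x ** y) = gconj c x ** gconj c y.
Proof.
  unfold gconj. rewrite !gmulA, <- (gmulA G (c ** x) (inv c) c), gmulV, gmul1r.
  reflexivity.
Qed.

Lemma gconj_inv (c x : G) : gconj c (inv x) = inv (gconj c x).
Proof. unfold gconj. rewrite !inv_mul, inv_inv, gmulA. reflexivity. Qed.

Lemma gconj_one (c : G) : gconj c 1 = 1.
Proof. unfold gconj. rewrite gmul1r, gmulVr. reflexivity. Qed.

Lemma gconj_by_one (x : G) : gconj 1 x = x.
Proof. unfold gconj. rewrite inv_one, gmul1, gmul1r. reflexivity. Qed.

Lemma gconj_zpow (c h : G) (z : Z) : gconj c (zpow h z) = zpow (gconj c h) z.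
Proof.
  induction z as [|z IH|z IH] using Z.peano_ind.
  - apply gconj_one.
  - rewrite <- Z.add_1_r, !zpow_succ, gconj_mul, IH. reflexivity.
  - rewrite <- Z.sub_1_r, !zpow_pred, gconj_mul, IH, gconj_inv. reflexivity.
Qed.

Lemma gconj_comp (a b x : G) : gconj a (gconj b x) = gconj (a ** b) x.
Proof. unfold gconj. rewrite inv_mul, !gmulA. reflexivity. Qed.

Lemma gconj_inv_l (c x : G) : gconj (inv c) (gconj c x) = x.
Proof. rewrite gconj_comp, gmulV. apply gconj_by_one. Qed.

Lemma mul_conj_swap (k x : G) : k ** x = gconj k x ** k.
Proof. unfold gconj. rewrite <- gmulA, gmulV, gmul1r. reflexivity. Qed.

Lemma gconj_zpow_comm (g : G) (a b : Z) : gconj (zpow g a) (zpow g b) = zpow g b.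
Proof. unfold gconj. rewrite zpow_comm, <- gmulA, gmulVr, gmul1r. reflexivity. Qed.

Lemma gconj_zpow_scale (f h : G) (N P k : Z) :
  gconj f (zpow h N) = zpow h P -> gconj f (zpow h (N * k)) = zpow h (P * k).
Proof. intro HP. rewrite <- !zpow_mul, gconj_zpow, HP. reflexivity. Qed.

Lemma gconj_iter (f h : G) (N P : Z) : gconj f (zpow h N) = zpow h P ->
  forall j : nat, gconj (gpow f j) (zpow h (N ^ Z.of_nat j)) = zpow h (P ^ Z.of_nat j).
Proof.
  intros HP j. induction j as [|j IH].
  - apply gconj_by_one.
  - rewrite Nat2Z.inj_succ, !Z.pow_succ_r by lia. simpl gpow.
    rewrite <- gconj_comp, (Z.mul_comm N), (gconj_zpow_scale _ _ _ _ _ IH).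
    rewrite (Z.mul_comm _ N), (gconj_zpow_scale _ _ _ _ _ HP), Z.mul_comm.
    reflexivity.
Qed.

End GroupLaws.

Lemma pow_succ_ineq (N : Z) (j : nat) : (1 <= N)%Z ->
  ((N + 1) ^ Z.of_nat j * N >= N ^ Z.of_nat j * (N + Z.of_nat j))%Z.
Proof.
  intros HN. induction j as [|j IH].
  - change (Z.of_nat 0) with 0%Z. rewrite !Z.pow_0_r. lia.
  - rewrite Nat2Z.inj_succ, !Z.pow_succ_r by lia.
    assert (0 <= N ^ Z.of_nat j)%Z by (apply Z.pow_nonneg; lia).
    nia.
Qed.

(** If [Q N^j = P^(j+1)] with [|P| > N >= 1], then [|Q| > j]: the ratio
    [P^(j+1) / N^j] grows at least linearly in [j]. *)
Lemma power_gap (N P Q : Z) (j : nat) : (1 <= N)%Z -> (N < Z.abs P)%Z ->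
  (Q * N ^ Z.of_nat j = P ^ Z.succ (Z.of_nat j))%Z -> (Z.of_nat j < Z.abs Q)%Z.
Proof.
  intros HN HP HQ.
  assert (Habs : (Z.abs Q * N ^ Z.of_nat j = Z.abs P ^ Z.succ (Z.of_nat j))%Z).
  { rewrite <- Z.abs_pow, <- HQ, Z.abs_mul, (Z.abs_eq (N ^ _)) by (apply Z.pow_nonneg; lia).
    reflexivity. }
  assert (Hmono : ((N + 1) ^ Z.succ (Z.of_nat j) <= Z.abs P ^ Z.succ (Z.of_nat j))%Z)
    by (apply Z.pow_le_mono_l; lia).
  rewrite Z.pow_succ_r in Hmono by lia.
  pose proof (pow_succ_ineq N j HN).
  assert (0 < N ^ Z.of_nat j)%Z by (apply Z.pow_pos_nonneg; lia).
  assert (0 <= (N + 1) ^ Z.of_nat j)%Z by (apply Z.pow_nonneg; lia).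
  nia.
Qed.

(** * Metric and path-system geometry *)

Section MetricFacts.
Context {X : MetricSpace}.

Lemma triangle (a b c : X) : Defs.dist X a c <= Defs.dist X a b + Defs.dist X b c.
Proof. apply Defs.dist_tri. Qed.

Lemma dist_comm (a b : X) : Defs.dist X a b = Defs.dist X b a.
Proof. apply Defs.dist_sym. Qed.

Lemma dist_nonneg (a b : X) : 0 <= Defs.dist X a b.
Proof. apply Defs.dist_ge0. Qed.

Lemma dist_self (a : X) : Defs.dist X a a = 0.
Proof. apply Defs.dist_eq0. reflexivity. Qed.

End MetricFacts.

Section PathSystem.
Variables (mu nu : R) (G : Group) (X : MetricSpace) (act : G -> X -> X)
  (Gam : Path X -> Prop).
Hypothesis Hpsg : path_system_group mu nu act Gam.
Local Notation d := (Defs.dist X).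

Lemma path_between (x y : X) : exists p, Gam p /\ joins p x y.
Proof. destruct Hpsg as (_ & _ & _ & _ & _ & Hjoin & _). apply Hjoin. Qed.

Lemma path_restrict p s t :
  Gam p -> pa p <= s -> s <= t -> t <= pb p -> Gam (mkPath s t (pf p)).
Proof. destruct Hpsg as (_ & _ & _ & _ & Hsub & _). apply Hsub. Qed.

Lemma path_interval p : Gam p -> pa p <= pb p.
Proof.
  destruct Hpsg as (_ & _ & _ & _ & _ & _ & Hqg). intro Hp.
  destruct (Hqg p Hp) as [[Hab _] _]. exact Hab.
Qed.

(** The quasi-geodesic inequalities, with the constants made nonnegative since
    [mu] and [nu] carry no sign assumption. *)
Lemma path_qgeod p t t' : Gam p -> pa p <= t <= pb p -> pa p <= t' <= pb p ->
  d (pf p t) (pf p t') <= Rabs (t - t') /\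
  Rabs (t - t') <= Rabs mu * d (pf p t) (pf p t') + Rabs nu.
Proof.
  destruct Hpsg as (_ & _ & _ & _ & _ & _ & Hqg). intros Hp Ht Ht'.
  destruct (Hqg p Hp) as [_ Hq]. destruct (Hq t t' Ht Ht') as [Hlo Hup].
  split; [exact Hlo|].
  pose proof (dist_nonneg (pf p t) (pf p t')).
  pose proof (Rle_abs mu). pose proof (Rle_abs nu).
  assert (mu * d (pf p t) (pf p t') <= Rabs mu * d (pf p t) (pf p t'))
    by (apply Rmult_le_compat_r; assumption).
  lra.
Qed.

Lemma dist_le_param_gap p s1 s2 : Gam p -> pa p <= s1 -> s1 <= s2 -> s2 <= pb p ->
  d (pf p s1) (pf p s2) <= s2 - s1.
Proof.
  intros Hp H1 H2 H3. destruct (path_qgeod p s1 s2 Hp ltac:(lra) ltac:(lra)) as [Hlo _].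
  rewrite Rabs_left1 in Hlo by lra. lra.
Qed.

Lemma param_gap_le p s1 s2 D : Gam p -> pa p <= s1 -> s1 <= s2 -> s2 <= pb p ->
  d (pf p s1) (pf p s2) <= D -> s2 - s1 <= Rabs mu * D + Rabs nu.
Proof.
  intros Hp H1 H2 H3 HD. destruct (path_qgeod p s1 s2 Hp ltac:(lra) ltac:(lra)) as [_ Hup].
  rewrite Rabs_left1 in Hup by lra. pose proof (Rabs_pos mu).
  assert (Rabs mu * d (pf p s1) (pf p s2) <= Rabs mu * D)
    by (apply Rmult_le_compat_l; assumption).
  lra.
Qed.

(** Constants: coarse Lipschitz constant of a constricting map, distance between
    two constricting maps onto one set, and the Morse constant. *)
Definition Lip (delta s : R) : R := 2 * delta + Rabs mu * s + Rabs nu.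
Definition Kuniq (delta : R) : R := 2 * delta + Lip delta delta.
Definition Rmorse (delta : R) : R := 4 * Rabs mu * delta + Rabs nu + 2 * delta.

Lemma Lip_mono delta s s' : s <= s' -> Lip delta s <= Lip delta s'.
Proof.
  intro Hs. unfold Lip. pose proof (Rabs_pos mu).
  assert (Rabs mu * s <= Rabs mu * s') by (apply Rmult_le_compat_l; assumption).
  lra.
Qed.

Section ConstrictingMap.
Variables (B : X -> Prop) (p : X -> X) (delta : R).
Hypothesis Hc : constricting_map Gam B p delta.

Lemma cm_delta_nonneg (x : X) : 0 <= delta.
Proof.
  destruct Hc as (HB & Hnear & _). pose proof (Hnear (p x) (HB x)).
  pose proof (dist_nonneg (p x) (p (p x))). lra.
Qed.

(** A constricting map is coarsely Lipschitz: if [p x] and [p y] are far apart,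
    a path from [x] to [y] passes near both, and its length is controlled by
    [d x y]. *)
Lemma cm_lip (x y : X) : d (p x) (p y) <= Lip delta (d x y).
Proof.
  pose proof (cm_delta_nonneg x) as Hd. unfold Lip.
  pose proof (Rabs_pos nu).
  assert (0 <= Rabs mu * d x y) by (apply Rmult_le_pos; auto using Rabs_pos, dist_nonneg).
  destruct (Rle_dec (d (p x) (p y)) delta) as [Hle|Hgt]; [lra|].
  destruct (path_between x y) as (q & Hq & Jx & Jy).
  destruct Hc as (_ & _ & Hcs).
  destruct (Hcs x y q Hq (conj Jx Jy) ltac:(lra)) as [(t1 & Ht1 & D1) (t2 & Ht2 & D2)].
  pose proof (path_interval q Hq).
  destruct (path_qgeod q t1 t2 Hq Ht1 Ht2) as [Q12 _].
  destruct (path_qgeod q (pa q) (pb q) Hq ltac:(lra) ltac:(lra)) as [_ Qab].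
  rewrite Jx, Jy in Qab.
  assert (Rabs (t1 - t2) <= Rabs (pa q - pb q))
    by (unfold Rabs; repeat destruct Rcase_abs; lra).
  pose proof (triangle (p x) (pf q t1) (p y)).
  pose proof (triangle (pf q t1) (pf q t2) (p y)).
  rewrite dist_comm in D1. lra.
Qed.

Lemma cm_near_set (a z : X) : B a -> d z (p z) <= d z a + delta + Lip delta (d z a).
Proof.
  intro Ba. pose proof Hc as (_ & Hnear & _).
  pose proof (Hnear a Ba). pose proof (cm_lip a z).
  pose proof (triangle z a (p z)). pose proof (triangle a (p a) (p z)).
  rewrite (dist_comm a z) in *. lra.
Qed.

Lemma near_projection_before be t : Gam be -> B (pf be (pa be)) ->
  pa be <= t <= pb be ->
  exists s, pa be <= s <= t /\ d (pf be s) (p (pf be t)) <= 2 * delta.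
Proof.
  intros Hbe Ba Ht. pose proof (cm_delta_nonneg (pf be t)) as Hd.
  destruct Hc as (_ & Hnear & Hcs).
  destruct (Rle_dec (d (p (pf be (pa be))) (p (pf be t))) delta) as [Hle|Hgt].
  - exists (pa be). split; [lra|].
    pose proof (Hnear _ Ba). pose proof (triangle (pf be (pa be)) (p (pf be (pa be))) (p (pf be t))).
    lra.
  - destruct (Hcs (pf be (pa be)) (pf be t) (mkPath (pa be) t (pf be))) as [_ (s & Hs & Ds)].
    + apply path_restrict; auto; lra.
    + split; reflexivity.
    + lra.
    + simpl in Hs, Ds. exists s. split; [lra|]. lra.
Qed.

Lemma near_projection_after be t : Gam be -> B (pf be (pb be)) ->
  pa be <= t <= pb be ->
  exists s, t <= s <= pb be /\ d (pf be s) (p (pf be t)) <= 2 * delta.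
Proof.
  intros Hbe Bb Ht. pose proof (cm_delta_nonneg (pf be t)) as Hd.
  destruct Hc as (_ & Hnear & Hcs).
  destruct (Rle_dec (d (p (pf be t)) (p (pf be (pb be)))) delta) as [Hle|Hgt].
  - exists (pb be). split; [lra|].
    pose proof (Hnear _ Bb). pose proof (triangle (pf be (pb be)) (p (pf be (pb be))) (p (pf be t))).
    rewrite (dist_comm (p (pf be (pb be)))) in *. lra.
  - destruct (Hcs (pf be t) (pf be (pb be)) (mkPath t (pb be) (pf be))) as [(s & Hs & Ds) _].
    + apply path_restrict; auto; lra.
    + split; reflexivity.
    + lra.
    + simpl in Hs, Ds. exists s. split; [lra|]. lra.
Qed.

Lemma morse be a b : Gam be -> joins be a b -> B a -> B b ->
  forall t, pa be <= t <= pb be -> d (pf be t) (p (pf be t)) <= Rmorse delta.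
Proof.
  intros Hbe [Ja Jb] Ba Bb t Ht. pose proof (cm_delta_nonneg a) as Hd.
  rewrite <- Ja in Ba. rewrite <- Jb in Bb.
  destruct (near_projection_before be t Hbe Ba Ht) as (s1 & Hs1 & D1).
  destruct (near_projection_after be t Hbe Bb Ht) as (s2 & Hs2 & D2).
  assert (D12 : d (pf be s1) (pf be s2) <= 4 * delta).
  { pose proof (triangle (pf be s1) (p (pf be t)) (pf be s2)).
    rewrite (dist_comm (p (pf be t))) in *. lra. }
  pose proof (param_gap_le be s1 s2 _ Hbe ltac:(lra) ltac:(lra) ltac:(lra) D12).
  pose proof (dist_le_param_gap be s1 t Hbe ltac:(lra) ltac:(lra) ltac:(lra)).
  pose proof (triangle (pf be t) (pf be s1) (p (pf be t))).
  rewrite (dist_comm (pf be s1) (pf be t)) in *.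
  unfold Rmorse. lra.
Qed.

(** Any other δ-constricting map [q] sends two points of [B] with far-apart
    images to points uniformly close to [B]: the path between them passes near
    [q a], and the Morse property puts that path near [B]. *)
Lemma far_projections_near (C : X -> Prop) (q : X -> X) (a b : X) :
  constricting_map Gam C q delta -> B a -> B b -> d (q a) (q b) > delta ->
  exists c, B c /\ d (q a) c <= delta + Rmorse delta.
Proof.
  intros (_ & _ & Hcs) Ba Bb Hfar.
  destruct (path_between a b) as (be & Hbe & J).
  destruct (Hcs a b be Hbe J Hfar) as [(t & Ht & Dt) _].
  pose proof (morse be a b Hbe J Ba Bb t Ht).
  destruct Hc as (HB & _ & _).
  exists (p (pf be t)). split; [apply HB|].
  pose proof (triangle (q a) (pf be t) (p (pf be t))).
  rewrite dist_comm in Dt. lra.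
Qed.

Lemma cm_unique (p' : X -> X) : constricting_map Gam B p' delta ->
  forall x, d (p x) (p' x) <= Kuniq delta.
Proof.
  intros Hc' x. pose proof (cm_delta_nonneg x) as Hd.
  pose proof (Rabs_pos mu). pose proof (Rabs_pos nu).
  assert (0 <= Rabs mu * delta) by (apply Rmult_le_pos; assumption).
  pose proof Hc as (HB & Hnear & Hcs). pose proof Hc' as (HB' & Hnear' & Hcs').
  unfold Kuniq, Lip.
  set (P := p x). set (P' := p' x).
  assert (NP : d P (p' P) <= delta) by exact (Hnear' P (HB x)).
  destruct (Rle_dec (d P' (p' P)) delta) as [Hle|Hgt].
  { pose proof (triangle P (p' P) P'). rewrite (dist_comm (p' P)) in *. lra. }
  (* the path from [x] to [P] passes near [P'] at some parameter [t'] *)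
  destruct (path_between x P) as (be & Hbe & Jx & JP).
  assert (Hfar : d P' (p' P) > delta) by lra.
  destruct (Hcs' x P be Hbe (conj Jx JP) Hfar) as [(t' & Ht' & Dt') _].
  fold P' in Dt'. pose proof (path_interval be Hbe).
  assert (NP' : d (p P') P' <= delta) by (rewrite dist_comm; exact (Hnear P' (HB' x))).
  destruct (Rle_dec (d P (p (pf be t'))) delta) as [Hle'|Hgt'].
  { pose proof (cm_lip (pf be t') P') as L. pose proof (Lip_mono delta _ _ Dt').
    pose proof (triangle P (p (pf be t')) P'). pose proof (triangle (p (pf be t')) (p P') P').
    unfold Lip in *. lra. }
  (* otherwise the initial segment up to [t'] passes near [P] at [t''] *)
  destruct (Hcs x (pf be t') (mkPath (pa be) t' (pf be))) as [(t'' & Ht'' & Dt'') _].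
  { apply path_restrict; auto; lra. }
  { split; [exact Jx | reflexivity]. }
  { exact (Rnot_le_lt _ _ Hgt'). }
  simpl in Ht'', Dt''. fold P in Dt''.
  assert (Dend : d (pf be t'') (pf be (pb be)) <= delta) by (rewrite JP; exact Dt'').
  pose proof (param_gap_le be t'' (pb be) _ Hbe ltac:(lra) ltac:(lra) ltac:(lra) Dend).
  pose proof (dist_le_param_gap be t'' t' Hbe ltac:(lra) ltac:(lra) ltac:(lra)).
  pose proof (triangle P (pf be t'') P'). pose proof (triangle (pf be t'') (pf be t') P').
  rewrite (dist_comm P (pf be t'')) in *.
  lra.
Qed.

End ConstrictingMap.

Local Infix "**" := (gmul G) (at level 40, left associativity).

Lemma act_one (x : X) : act (gone G) x = x.
Proof. destruct Hpsg as (_ & (H1 & _) & _). apply H1. Qed.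

Lemma act_mul (f h : G) (x : X) : act (f ** h) x = act f (act h x).
Proof. destruct Hpsg as (_ & (_ & HM & _) & _). apply HM. Qed.

Lemma act_iso (f : G) (x y : X) : d (act f x) (act f y) = d x y.
Proof. destruct Hpsg as (_ & (_ & _ & HI) & _). apply HI. Qed.

Lemma act_inv_l (f : G) (x : X) : act (ginv G f) (act f x) = x.
Proof. rewrite <- act_mul, gmulV, act_one. reflexivity. Qed.

Lemma act_inv_r (f : G) (x : X) : act f (act (ginv G f) x) = x.
Proof. rewrite <- act_mul, gmulVr, act_one. reflexivity. Qed.

Lemma path_translate (f : G) q :
  Gam q -> Gam (mkPath (pa q) (pb q) (fun t => act f (pf q t))).
Proof. destruct Hpsg as (_ & _ & _ & Hinv & _). apply Hinv. Qed.

(** Pigeonhole principle from properness: if for every [n] some element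
    satisfying [Q n] moves [x] boundedly, two different [n] share a witness. *)
Lemma proper_pigeonhole (x : X) (R0 : R) (Q : nat -> G -> Prop) :
  (forall n, exists h, Q n h /\ d x (act h x) <= R0) ->
  exists i j h, (i < j)%nat /\ Q i h /\ Q j h.
Proof.
  intro HQ. destruct (functional_choice _ HQ) as [phi Hphi].
  destruct Hpsg as (_ & _ & Hproper & _). destruct (Hproper x R0) as [l Hl].
  apply NNPP. intro Hno.
  assert (Hinj : Injective phi).
  { intros i j Hij. destruct (Nat.lt_total i j) as [Hlt | [Heq | Hgt]]; auto; exfalso.
    - apply Hno. exists i, j, (phi i). rewrite Hij at 2. split; auto. split; apply Hphi.
    - apply Hno. exists j, i, (phi j). rewrite <- Hij at 2. split; auto. split; apply Hphi. }
  assert (Hincl : incl (map phi (seq 0 (S (length l)))) l).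
  { intros h Hh. apply in_map_iff in Hh. destruct Hh as (n & <- & _). apply Hl, Hphi. }
  pose proof (NoDup_incl_length (Injective_map_NoDup Hinj (seq_NoDup _ 0)) Hincl) as Hlen.
  rewrite length_map, length_seq in Hlen. lia.
Qed.

Lemma cm_transport (B B' : X -> Prop) (p : X -> X) (delta : R) (f : G) :
  constricting_map Gam B p delta ->
  (forall z, B' z <-> B (act (ginv G f) z)) ->
  constricting_map Gam B' (fun z => act f (p (act (ginv G f) z))) delta.
Proof.
  intros (HB & Hnear & Hcs) HB'. split; [|split].
  - intro x. apply HB'. rewrite act_inv_l. apply HB.
  - intros x Bx. rewrite <- (act_inv_r f x) at 1. rewrite act_iso. apply Hnear, HB', Bx.
  - intros x y q Hq [Jx Jy] Hfar. rewrite act_iso in Hfar.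
    set (q' := mkPath (pa q) (pb q) (fun t => act (ginv G f) (pf q t))).
    assert (Jq : joins q' (act (ginv G f) x) (act (ginv G f) y))
      by (split; simpl; congruence).
    destruct (Hcs _ _ q' (path_translate _ q Hq) Jq Hfar) as [(t1 & Ht1 & D1) (t2 & Ht2 & D2)].
    simpl in *. split; [exists t1 | exists t2]; split; auto;
      rewrite <- (act_iso (ginv G f)), act_inv_l; assumption.
Qed.

(** Coarse equivariance: an isometry preserving [B] commutes with a
    constricting map onto [B] up to [Kuniq δ], by uniqueness. *)
Lemma cm_equiv (B : X -> Prop) (p : X -> X) (delta : R) (f : G) :
  constricting_map Gam B p delta -> (forall z, B z <-> B (act f z)) ->
  forall x, d (p (act f x)) (act f (p x)) <= Kuniq delta.
Proof.
  intros Hc Hf x.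
  assert (Hc' : constricting_map Gam B (fun z => act f (p (act (ginv G f) z))) delta).
  { apply (cm_transport B); auto. intro z. rewrite (Hf (act (ginv G f) z)), act_inv_r. tauto. }
  pose proof (cm_unique B p delta Hc _ Hc' (act f x)) as U. simpl in U.
  rewrite act_inv_l in U. exact U.
Qed.

(** * The elementary closure of a constricting element *)

Section ElementaryClosure.
Variables (g : G) (A : X -> Prop) (piA : X -> X) (delta : R).
Hypothesis Hce : constricting_element act Gam g A piA delta.
Variable x0 : X.
Hypothesis Hx0 : A x0.
Local Notation zp := (zpow G g).
Hypothesis Hcob : forall y, A y -> exists m, d y (act (zp m) x0) <= delta.
Local Notation E := (elem_closure act A).

Lemma cmA : constricting_map Gam A piA delta.
Proof. destruct Hce as (_ & _ & Hc & _). exact Hc. Qed.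

Lemma delta_nonneg : 0 <= delta.
Proof. exact (cm_delta_nonneg A piA delta cmA x0). Qed.

Lemma zpow_inj (a b : Z) : zp a = zp b -> a = b.
Proof.
  intro Hab. destruct Hce as (Hinf & _).
  assert (H1 : zp (a - b) = gone G).
  { unfold Z.sub. rewrite zpow_add, zpow_opp, Hab. apply gmulVr. }
  destruct (Z.lt_trichotomy 0 (a - b)) as [Hpos | [Hz | Hneg]]; [exfalso | lia | exfalso].
  - apply (Hinf (Z.to_nat (a - b))); [lia|].
    rewrite <- zpow_nat, Z2Nat.id by lia. exact H1.
  - apply (Hinf (Z.to_nat (b - a))); [lia|].
    rewrite <- zpow_nat, Z2Nat.id by lia.
    replace (b - a)%Z with (- (a - b))%Z by lia. rewrite zpow_opp, H1. apply inv_one.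
Qed.

Lemma A_zpow (m : Z) (z : X) : A z <-> A (act (zp m) z).
Proof.
  destruct Hce as (_ & Hg & _).
  assert (Hfwd : forall m z, A z -> A (act (zp m) z)).
  { clear m z. intro m. induction m as [|m IH|m IH] using Z.peano_ind; intros z Hz.
    - rewrite zpow0, act_one. exact Hz.
    - rewrite <- Z.add_1_r, zpow_succ, act_mul. apply Hg, IH, Hz.
    - rewrite <- Z.sub_1_r, zpow_pred, act_mul. apply Hg, IH, Hz. }
  split; [apply Hfwd|]. intro Hz. apply (Hfwd (- m)%Z) in Hz.
  rewrite <- act_mul, <- zpow_add, Z.add_opp_diag_l, zpow0, act_one in Hz. exact Hz.
Qed.

Lemma act_zpow_cancel (m : Z) (y : X) : act (zp m) (act (zp (- m)) y) = y.
Proof. rewrite <- act_mul, <- zpow_add, Z.add_opp_diag_r, zpow0, act_one. reflexivity. Qed.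

Lemma piA_equiv (m : Z) (x : X) : d (piA (act (zp m) x)) (act (zp m) (piA x)) <= Kuniq delta.
Proof. apply (cm_equiv A piA delta (zp m) cmA), A_zpow. Qed.

(** By properness, powers of [g] moving [x0] a bounded amount have bounded
    exponent. *)
Lemma power_displacement_bound (R0 : R) :
  exists Bn, forall n, d x0 (act (zp n) x0) <= R0 -> (Z.abs n <= Bn)%Z.
Proof.
  destruct Hpsg as (_ & _ & Hproper & _). destruct (Hproper x0 R0) as [l Hl].
  assert (Hlist : forall l : list G, exists Bn, forall n, In (zp n) l -> (Z.abs n <= Bn)%Z).
  { clear l Hl. intro l. induction l as [|a l [Bn HBn]].
    - exists 0%Z. intros n [].
    - destruct (classic (exists n0, zp n0 = a)) as [[n0 Hn0] | Hno].
      + exists (Z.max (Z.abs n0) Bn). intros n [Hn | Hn].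
        * rewrite <- Hn0 in Hn. apply zpow_inj in Hn. subst. lia.
        * specialize (HBn n Hn). lia.
      + exists Bn. intros n [Hn | Hn]; [exfalso; eauto | auto]. }
  destruct (Hlist l) as [Bn HBn]. exists Bn. intros n Hn. apply HBn, Hl, Hn.
Qed.

Lemma E_one : E (gone G).
Proof.
  exists 0. split; intros a Ha; exists a; split; auto; rewrite act_one, dist_self; lra.
Qed.

Lemma E_zpow (m : Z) : E (zp m).
Proof.
  exists 0. split; intros a Ha.
  - exists (act (zp m) a). split; [apply A_zpow, Ha|]. rewrite dist_self. lra.
  - exists (act (zp (- m)) a). split; [apply A_zpow, Ha|].
    rewrite act_zpow_cancel, dist_self. lra.
Qed.

Lemma E_mul (f h : G) : E f -> E h -> E (f ** h).
Proof.
  intros [r1 [F1 F2]] [r2 [H1 H2]]. exists (r1 + r2). split.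
  - intros a Ha. destruct (H1 a Ha) as (b & Hb & Db). destruct (F1 b Hb) as (c & Hc & Dc).
    exists c. split; [exact Hc|]. rewrite act_mul.
    pose proof (triangle (act f (act h a)) (act f b) c). rewrite act_iso in *. lra.
  - intros b Hb. destruct (F2 b Hb) as (a1 & Ha1 & D1). destruct (H2 a1 Ha1) as (a2 & Ha2 & D2).
    exists a2. split; [exact Ha2|]. rewrite act_mul.
    pose proof (triangle b (act f a1) (act f (act h a2))). rewrite act_iso in *. lra.
Qed.

Lemma E_inv (f : G) : E f -> E (ginv G f).
Proof.
  intros [r [F1 F2]]. exists r. split.
  - intros a Ha. destruct (F2 a Ha) as (b & Hb & Db). exists b. split; [exact Hb|].
    rewrite <- (act_iso f), act_inv_r. exact Db.
  - intros b Hb. destruct (F1 b Hb) as (a & Ha & Da). exists a. split; [exact Ha|].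
    rewrite <- (act_iso f), act_inv_r. exact Da.
Qed.

Lemma E_gpow (f : G) (n : nat) : E f -> E (gpow f n).
Proof. intro Hf. induction n; simpl; [apply E_one | apply E_mul; assumption]. Qed.

Lemma bounded_twisted_conjugates (f : G) : E f -> exists R0, forall n : nat,
  exists m, d x0 (act (zp m ** gconj G f (zp (Z.of_nat n))) x0) <= R0.
Proof.
  intros [r [F1 F2]]. destruct (F2 x0 Hx0) as (a & Ha & Da).
  exists (2 * r + delta). intro n. set (gn := zp (Z.of_nat n)).
  destruct (F1 (act gn a) (proj1 (A_zpow _ a) Ha)) as (b & Hb & Db).
  destruct (Hcob b Hb) as (m & Dm).
  exists (- m)%Z.
  rewrite <- (act_iso (zp m)), act_mul, act_zpow_cancel. unfold gconj. rewrite !act_mul.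
  assert (Dy : d (act f (act gn a)) (act f (act gn (act (ginv G f) x0))) <= r).
  { rewrite !act_iso, <- (act_iso f a), act_inv_r, dist_comm. exact Da. }
  pose proof (triangle (act (zp m) x0) b (act f (act gn (act (ginv G f) x0)))).
  pose proof (triangle b (act f (act gn a)) (act f (act gn (act (ginv G f) x0)))).
  rewrite dist_comm in Dm. rewrite (dist_comm b (act f (act gn a))) in *. lra.
Qed.

Lemma conj_power (f : G) : E f ->
  exists N, (1 <= N)%Z /\ exists P, gconj G f (zp N) = zp P.
Proof.
  intro Ef. destruct (bounded_twisted_conjugates f Ef) as [R0 HR0].
  set (c := fun n : nat => gconj G f (zp (Z.of_nat n))).
  destruct (proper_pigeonhole x0 R0 (fun n h => exists m, h = zp m ** c n))
    as (i & j & h & Hij & (mi & Hi) & (mj & Hj)).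
  { intro n. destruct (HR0 n) as [m Hm]. exists (zp m ** c n). split; eauto. }
  exists (Z.of_nat j - Z.of_nat i)%Z. split; [lia|]. exists (mi - mj)%Z.
  assert (Hcj : c j = zp (mi - mj) ** c i).
  { apply (gmul_cancel_l G (zp mj)). rewrite <- Hj, Hi, gmulA, <- zpow_add.
    do 3 f_equal. lia. }
  unfold Z.sub at 1. rewrite zpow_add, gconj_mul, zpow_opp, gconj_inv.
  change (c j ** ginv G (c i) = zp (mi - mj)).
  rewrite Hcj, <- gmulA, gmulVr, gmul1r. reflexivity.
Qed.

(** Pushing [piA] forward by [f] gives a
    constricting map onto [fA]; it sends far-apart points of [A] to points
    near [A], so [fA] comes close to [A] near the orbit of [x0]. *)
Lemma bounded_double_coset (f : G) : E f ->
  exists m m', d x0 (act (zp m ** f ** zp m') x0) <= Rmorse delta + 3 * delta.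
Proof.
  intro Ef. pose proof Ef as [r [_ F2]]. pose proof delta_nonneg as Hd.
  set (q := fun z => act f (piA (act (ginv G f) z))).
  assert (Hq : constricting_map Gam (fun z => A (act (ginv G f) z)) q delta)
    by (apply (cm_transport A); [exact cmA | tauto]).
  set (r' := r + delta + Lip delta r).
  assert (Hmove : forall b, A b -> d b (q b) <= r').
  { intros b Hb. destruct (F2 b Hb) as (a & Ha & Da).
    rewrite <- (act_iso (ginv G f)). unfold q. rewrite act_inv_l.
    rewrite <- (act_iso (ginv G f)), act_inv_l in Da.
    pose proof (cm_near_set A piA delta cmA a (act (ginv G f) b) Ha).
    pose proof (Lip_mono delta _ _ Da). unfold r'. lra. }
  destruct (power_displacement_bound (delta + 2 * r')) as [Bn HBn].
  set (y := act (zp (Bn + 1)) x0).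
  assert (Hfar : d x0 y > delta + 2 * r').
  { apply Rnot_le_gt. intro Hle. specialize (HBn _ Hle). lia. }
  assert (Ay : A y) by (apply A_zpow, Hx0).
  assert (Hqfar : d (q x0) (q y) > delta).
  { pose proof (Hmove x0 Hx0). pose proof (Hmove y Ay).
    pose proof (triangle x0 (q x0) y). pose proof (triangle (q x0) (q y) y).
    rewrite (dist_comm (q y) y) in *. lra. }
  destruct (far_projections_near A piA delta cmA _ q x0 y Hq Hx0 Ay Hqfar) as (c & Ac & Dc).
  destruct (Hcob c Ac) as (m & Dm).
  destruct (Hcob _ (proj1 cmA (act (ginv G f) x0))) as (m' & Dm').
  exists (- m)%Z, m'.
  rewrite <- (act_iso (zp m)), !act_mul, act_zpow_cancel.
  assert (Dq : d (q x0) (act f (act (zp m') x0)) <= delta) by (unfold q; rewrite act_iso; exact Dm').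
  pose proof (triangle (act (zp m) x0) c (act f (act (zp m') x0))).
  pose proof (triangle c (q x0) (act f (act (zp m') x0))).
  rewrite dist_comm in Dm. rewrite (dist_comm c (q x0)) in *. lra.
Qed.

(** ** [E] normalises a power of [g] *)

Lemma finite_common_power (l : list G) : exists N, (1 <= N)%Z /\ exists Bp,
  forall h, In h l -> E h -> exists P, gconj G h (zp N) = zp P /\ (Z.abs P <= Bp)%Z.
Proof.
  induction l as [|a l (Nl & HNl & Bl & HBl)].
  - exists 1%Z. split; [lia|]. exists 0%Z. intros h [].
  - destruct (classic (E a)) as [Ea | Ea].
    + destruct (conj_power a Ea) as (Na & HNa & Pa & HPa).
      exists (Na * Nl)%Z. split; [nia|]. exists (Z.max (Z.abs (Pa * Nl)) (Bl * Na)).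
      intros h [<- | Hh] Eh.
      * exists (Pa * Nl)%Z. split; [exact (gconj_zpow_scale _ _ _ _ _ _ HPa) | lia].
      * destruct (HBl h Hh Eh) as (P & HP & HPb). exists (P * Na)%Z. split.
        -- rewrite Z.mul_comm. exact (gconj_zpow_scale _ _ _ _ _ _ HP).
        -- rewrite Z.abs_mul, (Z.abs_eq Na) by lia. nia.
    + exists Nl. split; [exact HNl|]. exists Bl.
      intros h [<- | Hh] Eh; [contradiction | auto].
Qed.

(** A single [N] works for all of [E], with uniformly bounded exponents: by
    [bounded_double_coset] each [f ∈ E] differs from one of finitely many
    elements by powers of [g], which commute with [g^N]. *)
Lemma conj_power_uniform : exists N, (1 <= N)%Z /\ exists Bp,
  forall f, E f -> exists P, gconj G f (zp N) = zp P /\ (Z.abs P <= Bp)%Z.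
Proof.
  destruct Hpsg as (_ & _ & Hproper & _).
  destruct (Hproper x0 (Rmorse delta + 3 * delta)) as [L HL].
  destruct (finite_common_power L) as (N & HN & Bp & HB).
  exists N. split; [exact HN|]. exists Bp. intros f Ef.
  destruct (bounded_double_coset f Ef) as (m & m' & Dm).
  set (h := zp m ** f ** zp m') in Dm.
  assert (Eh : E h) by (apply E_mul; [apply E_mul|]; auto using E_zpow).
  destruct (HB h (HL _ Dm) Eh) as (P & HP & HPb). exists P. split; [|exact HPb].
  assert (Hf : f = zp (- m) ** h ** zp (- m')).
  { unfold h. rewrite !gmulA, <- zpow_add, Z.add_opp_diag_l, zpow0, gmul1.
    rewrite <- gmulA, <- zpow_add, Z.add_opp_diag_r, zpow0, gmul1r. reflexivity. }
  rewrite Hf, <- !gconj_comp, gconj_zpow_comm, HP, gconj_zpow_comm. reflexivity.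
Qed.

Section PlusMinus.
Variables (N Bp : Z).
Hypothesis HN : (1 <= N)%Z.
Hypothesis Huniform : forall f, E f ->
  exists P, gconj G f (zp N) = zp P /\ (Z.abs P <= Bp)%Z.

(** No [f ∈ E] can conjugate [g^N] to [g^P] with [|P| > N]: its powers would
    conjugate [g^N] to powers of [g] with unbounded exponents. *)
Lemma no_large_conj_exponent (f : G) (P : Z) :
  E f -> gconj G f (zp N) = zp P -> ~ (N < Z.abs P)%Z.
Proof.
  intros Ef HP Hlarge.
  destruct (Huniform f Ef) as (P0 & _ & HP0).
  set (j := Z.to_nat Bp).
  destruct (Huniform (gpow f (S j)) (E_gpow f (S j) Ef)) as (Q & HQ & HQb).
  assert (HQP : (Q * N ^ Z.of_nat j = P ^ Z.succ (Z.of_nat j))%Z).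
  { apply zpow_inj. rewrite <- Nat2Z.inj_succ, <- (gconj_iter _ _ _ _ _ HP (S j)).
    rewrite Nat2Z.inj_succ, Z.pow_succ_r by lia.
    rewrite (gconj_zpow_scale _ _ _ _ _ (N ^ Z.of_nat j) HQ). reflexivity. }
  pose proof (power_gap N P Q j HN Hlarge HQP). unfold j in *. lia.
Qed.

(** Hence every [f ∈ E] conjugates [g^N] to [g^N] or [g^-N]: applying the
    bound to [f] and [f⁻¹] gives [|P| <= N] and [|P'| <= N] with [P' P = N²]. *)
Lemma conj_power_pm (f : G) : E f ->
  gconj G f (zp N) = zp N \/ gconj G f (zp N) = zp (- N).
Proof.
  intro Ef. destruct (Huniform f Ef) as (P & HP & _).
  destruct (Huniform (ginv G f) (E_inv f Ef)) as (P' & HP' & _).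
  pose proof (no_large_conj_exponent f P Ef HP).
  pose proof (no_large_conj_exponent (ginv G f) P' (E_inv f Ef) HP').
  assert (HPP' : (P' * P = N * N)%Z).
  { apply zpow_inj. rewrite <- (gconj_zpow_scale _ _ _ _ _ P HP'), Z.mul_comm.
    rewrite <- (gconj_zpow_scale _ _ _ _ _ N HP), gconj_inv_l. reflexivity. }
  assert (Habs : (Z.abs P' * Z.abs P = N * N)%Z) by (rewrite <- Z.abs_mul, HPP'; lia).
  assert (HPN : Z.abs P = N) by nia.
  rewrite HP. destruct (Z.abs_spec P) as [[_ Ep] | [_ Ep]]; [left | right]; f_equal; lia.
Qed.

End PlusMinus.

Lemma E_normalizes_power : exists N, (1 <= N)%Z /\ forall f, E f ->
  gconj G f (zp N) = zp N \/ gconj G f (zp N) = zp (- N).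
Proof.
  destruct conj_power_uniform as (N & HN & Bp & Hu).
  exists N. split; [exact HN|]. exact (conj_power_pm N Bp HN Hu).
Qed.

Lemma large_normalized_power (R0 : R) : exists M : nat, (1 <= M)%nat /\
  (forall f, E f -> forall j,
     exists j', gconj G f (zp (j * Z.of_nat M)) = zp (j' * Z.of_nat M)) /\
  (forall j, j <> 0%Z -> R0 < d x0 (act (zp (j * Z.of_nat M)) x0)).
Proof.
  destruct E_normalizes_power as (N & HN & Hpm).
  destruct (power_displacement_bound R0) as [Bn HBn].
  set (c := (Z.max Bn 0 + 1)%Z).
  assert (Hc : (1 <= c /\ Bn < c)%Z) by (unfold c; lia). clearbody c.
  exists (Z.to_nat (N * c)). rewrite Z2Nat.id by lia. split; [lia | split].
  - intros f Ef j. replace (j * (N * c))%Z with (N * (c * j))%Z by ring.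
    destruct (Hpm f Ef) as [Hf | Hf]; [exists j | exists (- j)%Z];
      rewrite (gconj_zpow_scale _ _ _ _ _ _ Hf); f_equal; ring.
  - intros j Hj. apply Rnot_le_lt. intro Hle. specialize (HBn _ Hle).
    rewrite Z.abs_mul, Z.abs_mul, (Z.abs_eq N), (Z.abs_eq c) in HBn by lia.
    assert (1 <= Z.abs j)%Z by lia.
    assert (c <= N * c)%Z by nia. assert (N * c <= Z.abs j * (N * c))%Z by nia. lia.
Qed.

(** If [E] normalises [<g^M>], every element of [<g^M, H ∩ E>] has the form
    [g^(jM) k] with [k ∈ H ∩ E]: these elements form a subgroup containing the
    generators. *)
Lemma generated_form (M : nat) (H : G -> Prop) :
  (forall f, E f -> forall j,
     exists j', gconj G f (zp (j * Z.of_nat M)) = zp (j' * Z.of_nat M)) ->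
  is_subgroup H ->
  forall u, generated (fun s => s = gpow g M \/ (H s /\ E s)) u ->
  exists j k, H k /\ E k /\ u = zp (j * Z.of_nat M) ** k.
Proof.
  intros Hnorm (H1 & HM & HI) u Hu. apply Hu.
  - split; [|split].
    + exists 0%Z, (gone G). rewrite Z.mul_0_l, zpow0, gmul1. auto using E_one.
    + intros x y (a & k & Hk & Ek & ->) (b & k' & Hk' & Ek' & ->).
      destruct (Hnorm k Ek b) as (b' & Hb').
      exists (a + b')%Z, (k ** k'). split; [auto | split; [apply E_mul; assumption|]].
      rewrite (gmulA G (zp (a * Z.of_nat M) ** k)), <- (gmulA G (zp (a * Z.of_nat M)) k).
      rewrite (mul_conj_swap G k), Hb', (gmulA G (zp (a * Z.of_nat M))), <- zpow_add, <- gmulA.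
      do 2 f_equal. ring.
    + intros x (a & k & Hk & Ek & ->).
      destruct (Hnorm (ginv G k) (E_inv k Ek) (- a)%Z) as (a' & Ha').
      exists a', (ginv G k). split; [auto | split; [apply E_inv, Ek|]].
      rewrite inv_mul, <- zpow_opp, mul_conj_swap, <- Ha'. do 3 f_equal. ring.
  - intros s [-> | [Hs Es]].
    + exists 1%Z, (gone G). rewrite gmul1r, Z.mul_1_l, zpow_nat. auto using E_one.
    + exists 0%Z, s. rewrite Z.mul_0_l, zpow0, gmul1. auto.
Qed.

(** A power [g^n] that moves [x0] far also separates the projections of
    [Y] and [g^n Y] when [diam_A Y <= eps], by coarse equivariance of [piA]. *)
Lemma projection_displacement (n : Z) (y z : X) (eps : R) :
  d (piA y) (piA z) <= eps ->
  d x0 (act (zp n) x0) - (eps + Kuniq delta + 2 * delta) <= d (piA y) (piA (act (zp n) z)).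
Proof.
  intro Hyz. destruct (Hcob (piA z) (proj1 cmA z)) as (m & Dm).
  assert (Hshift : d (act (zp m) x0) (act (zp n) (act (zp m) x0)) = d x0 (act (zp n) x0)).
  { rewrite <- !act_mul, <- zpow_add, Z.add_comm, zpow_add, act_mul, act_iso. reflexivity. }
  assert (Dm' : d (act (zp n) (piA z)) (act (zp n) (act (zp m) x0)) <= delta)
    by (rewrite act_iso; exact Dm).
  pose proof (piA_equiv n z).
  pose proof (triangle (act (zp m) x0) (piA z) (act (zp n) (act (zp m) x0))).
  pose proof (triangle (piA z) (act (zp n) (piA z)) (act (zp n) (act (zp m) x0))).
  pose proof (triangle (piA z) (piA y) (act (zp n) (piA z))).
  pose proof (triangle (piA y) (piA (act (zp n) z)) (act (zp n) (piA z))).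
  rewrite (dist_comm (piA z) (piA y)), (dist_comm (act (zp m) x0) (piA z)) in *. lra.
Qed.

Lemma theorem18_core (eps theta : R) :
  exists M : nat, (1 <= M)%nat /\
    forall (H : G -> Prop) (Y : X -> Prop),
      is_subgroup H ->
      (exists y, Y y) ->
      (forall h y, H h -> Y y -> Y (act h y)) ->
      diamA_le piA Y eps ->
      forall u : G,
        generated (fun s => s = gpow g M \/ (H s /\ E s)) u ->
        ~ (H u /\ E u) ->
        dA_gt piA Y (translate act u Y) theta.
Proof.
  destruct (large_normalized_power (theta + 1 + eps + Kuniq delta + 2 * delta))
    as (M & HM & Hnorm & Hfar).
  exists M. split; [exact HM|].
  intros H Y HH _ HY Hdiam u Hu Hnu.
  destruct (generated_form M H Hnorm HH u Hu) as (j & k & Hk & Ek & ->).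
  assert (Hj : j <> 0%Z).
  { intros ->. apply Hnu. rewrite Z.mul_0_l, zpow0, gmul1. split; assumption. }
  exists (theta + 1). split; [lra|].
  intros y z Hy (y' & Hy' & ->). rewrite act_mul.
  assert (Hky : Y (act k y')) by (apply HY; assumption).
  pose proof (projection_displacement (j * Z.of_nat M) y (act k y') eps (Hdiam y _ Hy Hky)).
  pose proof (Hfar j Hj). lra.
Qed.

End ElementaryClosure.
End PathSystem.

Lemma cobounded_zpow (G : Group) (X : MetricSpace) (act : G -> X -> X) (g : G)
  (A : X -> Prop) (x0 : X) (delta : R) :
  (forall y, A y -> exists n : nat,
     Defs.dist X y (act (gpow g n) x0) <= delta \/
     Defs.dist X y (act (gpow (ginv G g) n) x0) <= delta) ->
  forall y, A y -> exists m, Defs.dist X y (act (zpow G g m) x0) <= delta.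
Proof.
  intros Hcob y Hy. destruct (Hcob y Hy) as (n & [Dn | Dn]).
  - exists (Z.of_nat n). rewrite zpow_nat. exact Dn.
  - exists (- Z.of_nat n)%Z. rewrite zpow_opp, zpow_nat, gpow_inv. exact Dn.
Qed.

Theorem mainTheorem18 (mu nu : R) (G : Group) (X : MetricSpace)
  (act : G -> X -> X) (Gam : Path X -> Prop)
  (g : G) (A : X -> Prop) (piA : X -> X) (delta : R) :
  path_system_group mu nu act Gam ->
  constricting_element act Gam g A piA delta ->
  forall eps theta : R, 0 <= eps -> 0 <= theta ->
  exists M : nat, (1 <= M)%nat /\
    forall (H : G -> Prop) (Y : X -> Prop),
      is_subgroup H ->
      (exists y, Y y) ->
      (forall h y, H h -> Y y -> Y (act h y)) ->
      diamA_le piA Y eps ->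
      forall u : G,
        generated (fun s => s = gpow g M \/ (H s /\ elem_closure act A s)) u ->
        ~ (H u /\ elem_closure act A u) ->
        dA_gt piA Y (translate act u Y) theta.
Proof.
  intros Hpsg Hce eps theta _ _.
  pose proof Hce as (_ & _ & _ & x0 & Hx0 & Hcob).
  exact (theorem18_core mu nu G X act Gam Hpsg g A piA delta Hce x0 Hx0
           (cobounded_zpow G X act g A x0 delta Hcob) eps theta).
Qed.
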